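(* Let $n \geq 2$ and let $G$ be a graph that has the maximum atom-bond connectivity index among all graphs with $n$ vertices and edge-connectivity $1$. Then $G \cong K_n(1)$.
   Context: All graphs are simple and undirected. For a graph $G$ and a vertex $v$, $d(v)$ denotes the degree of $v$. The atom-bond connectivity (ABC) index is ${\rm ABC}(G)=\sum_{uv\in E(G)} \sqrt{\frac{d(u)+d(v)-2}{d(u)d(v)}}$. The edge-connectivity of a graph is the minimum number of edges whose removal disconnects it. For graphs $G,H$ on disjoint vertex sets, $G+H$ is their disjoint union, and the join $G\vee H$ is the graph on $V(G)\cup V(H)$ with edge set $E(G)\cup E(H)\cup\{uv: u\in V(G), v\in V(H)\}$. $K_n(k)$ denotes the graph $K_k \vee (K_1 + K_{n-k-1})$, i.e., the graph obtained from $K_{n-1}$ by adding one new vertex joined to exactly $k$ vertices of $K_{n-1}$. *)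

From HB Require Import structures.
From mathcomp Require Import all_boot all_order all_fingroup all_algebra.
From mathcomp Require Import reals.
Set Implicit Arguments. Unset Strict Implicit. Unset Printing Implicit Defensive.
Import Order.TTheory GRing.Theory Num.Theory.

Definition simple_graph (n : nat) (e : rel 'I_n) : Prop :=
  symmetric e /\ irreflexive e.

Definition edges (n : nat) (e : rel 'I_n) : {set {set 'I_n}} :=
  [set [set x; y] | x in 'I_n, y in 'I_n & e x y].

Definition del_edges (n : nat) (e : rel 'I_n) (F : {set {set 'I_n}}) : rel 'I_n :=
  fun x y => e x y && ([set x; y] \notin F).

Definition connected (n : nat) (e : rel 'I_n) : Prop :=
  forall x y : 'I_n, connect e x y.

Definition has_edge_cut (n : nat) (e : rel 'I_n) (k : nat) : Prop :=
  exists F : {set {set 'I_n}},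
    [/\ F \subset edges e, #|F| = k & ~ connected (del_edges e F)].

Definition edge_connectivity_is (n : nat) (e : rel 'I_n) (k : nat) : Prop :=
  has_edge_cut e k /\ (forall j, (j < k)%N -> ~ has_edge_cut e j).

Definition deg (n : nat) (e : rel 'I_n) (x : 'I_n) : nat := #|[set y | e x y]|.

Local Open Scope ring_scope.

Definition ABC (R : realType) (n : nat) (e : rel 'I_n) : R :=
  \sum_(x : 'I_n) \sum_(y : 'I_n | (x < y)%N && e x y)
     Num.sqrt (((deg e x)%:R + (deg e y)%:R - 2) / ((deg e x)%:R * (deg e y)%:R)).

(* K_n(k) = K_k \/ (K_1 + K_{n-k-1}) on 'I_n: vertex n-1 is the extra vertex,
   adjacent exactly to the vertices 0..k-1; all other pairs are adjacent. *)
Definition Knk (n k : nat) : rel 'I_n :=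
  fun x y => (x != y) &&
    (if (x == n.-1 :> nat) then (y < k)%N
     else if (y == n.-1 :> nat) then (x < k)%N else true).

Definition isomorphic (n : nat) (e1 e2 : rel 'I_n) : Prop :=
  exists f : {perm 'I_n}, forall x y, e1 x y = e2 (f x) (f y).

Arguments Knk n k : clear implicits.
Arguments ABC R {n} e.

(* A graph of edge-connectivity 1 has a bridge uv; deleting it leaves the side A of u and
   its complement.  Adding a missing edge xy between non-isolated vertices strictly increases
   ABC: the new edge weighs abc_weight (d_x + 1) (d_y + 1), more than the total decrease of the
   weights of the other edges at x and y.  An edge added inside A or inside its complement keeps
   uv a bridge, so an extremal graph is a clique on A and a clique on its complement joined by
   uv.  If both cliques have at least two vertices, moving all but one vertex to one side, which
   yields K_n(1), strictly increases ABC again; so one side is a single vertex. *)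

From HB Require Import structures.
From mathcomp Require Import all_boot all_order all_fingroup all_algebra.
From mathcomp Require Import reals.
From mathcomp Require Import ring lra zify.
Set Implicit Arguments. Unset Strict Implicit. Unset Printing Implicit Defensive.
Import Order.TTheory GRing.Theory Num.Theory.
Local Open Scope ring_scope.

Section RealFacts.
Variable R : realType.

Lemma le_of_subr_frac (a b p q : R) : a - b = p / q -> 0 <= p -> 0 < q -> b <= a.
Proof. by move=> h p_ge0 q_gt0; rewrite -subr_ge0 h divr_ge0 // ltW. Qed.

Lemma lt_of_subr_frac (a b p q : R) : a - b = p / q -> 0 < p -> 0 < q -> b < a.
Proof. by move=> h p_gt0 q_gt0; rewrite -subr_gt0 h divr_gt0. Qed.

Lemma le_sqrtr_of_sqr (u r : R) : 0 <= u -> u ^+ 2 <= r -> u <= Num.sqrt r.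
Proof.
move=> u_ge0 ur; rewrite -(ger0_norm u_ge0) -sqrtr_sqr ler_sqrt //.
exact: le_trans (sqr_ge0 u) ur.
Qed.

Lemma lt_sqrtr_of_sqr (u r : R) : 0 <= u -> u ^+ 2 < r -> u < Num.sqrt r.
Proof.
move=> u_ge0 ur; rewrite -(ger0_norm u_ge0) -sqrtr_sqr ltr_sqrt //.
exact: le_lt_trans (sqr_ge0 u) ur.
Qed.

Lemma sqrtr_le_of_sqr (u r : R) : 0 <= u -> r <= u ^+ 2 -> Num.sqrt r <= u.
Proof.
by move=> u_ge0 ru; rewrite -(ger0_norm u_ge0) -sqrtr_sqr ler_sqrt ?sqr_ge0.
Qed.

Lemma mulr_sqrt (c r : R) : 0 <= c -> 0 <= r -> c * Num.sqrt r = Num.sqrt (c ^+ 2 * r).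
Proof. by move=> c_ge0 r_ge0; rewrite sqrtrM ?sqr_ge0 // sqrtr_sqr ger0_norm. Qed.

Lemma subr_le_of_sqr (a b m c : R) :
  0 < m -> m <= a -> m <= b -> 0 <= c -> a ^+ 2 - b ^+ 2 <= 2 * m * c -> a - b <= c.
Proof.
move=> m_gt0 ma mb c_ge0 sqr_le; rewrite leNgt; apply/negP => lt_c.
have : (a - b) * (a + b) > c * (2 * m) by apply: ltr_pM; nra.
nra.
Qed.

End RealFacts.

(** * Edge weights *)

Section ABCWeight.
Variable R : realType.

Definition abc_weight (i j : nat) : R :=
  Num.sqrt ((i%:R + j%:R - 2) / (i%:R * j%:R)).

Lemma abc_weightC i j : abc_weight i j = abc_weight j i.
Proof. by rewrite /abc_weight (addrC (i%:R : R)) (mulrC (i%:R : R)). Qed.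

Definition invsqrtS (d : nat) : R := Num.sqrt (d.+1%:R)^-1.

Lemma invsqrtS_gt0 d : 0 < invsqrtS d.
Proof. by rewrite sqrtr_gt0 invr_gt0 ltr0Sn. Qed.

Lemma sqr_invsqrtS d : invsqrtS d ^+ 2 = (d.+1%:R)^-1.
Proof. by rewrite sqr_sqrtr // invr_ge0 ler0n. Qed.

Lemma sqr_abc_weightSS i j :
  abc_weight i.+1 j.+1 ^+ 2 =
  invsqrtS i ^+ 2 + invsqrtS j ^+ 2 - 2 * invsqrtS i ^+ 2 * invsqrtS j ^+ 2.
Proof.
have i_ge0 : 0 <= (i%:R : R) := ler0n _ i.
have j_ge0 : 0 <= (j%:R : R) := ler0n _ j.
rewrite !sqr_invsqrtS sqr_sqrtr ; last first.
  by rewrite -[i.+1%:R]natr1 -[j.+1%:R]natr1 divr_ge0; nra.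
rewrite -[i.+1%:R]natr1 -[j.+1%:R]natr1.
by field; apply/andP; split; apply/eqP; lra.
Qed.

Definition weight_loss (d : nat) : R :=
  if d == 1%N then 1 - invsqrtS 1 else invsqrtS d / (2 * d%:R).

Lemma abc_weight_decrease_le d t : (1 <= d)%N -> (1 <= t)%N ->
  abc_weight d t - abc_weight d.+1 t <= weight_loss d.
Proof.
move=> d_gt0 t_gt0; rewrite /weight_loss /abc_weight.
have t_ge1 : 1 <= (t%:R : R) by rewrite ler1n.
have t_neq0 : (t%:R : R) != 0 by rewrite pnatr_eq0 -lt0n.
case: eqP => [->|/eqP d_neq1].
  have -> : (2%:R + t%:R - 2) / (2%:R * t%:R) = (2%:R : R)^-1 by field.
  rewrite lerB // sqrtr_le_of_sqr // expr1n.
  by apply: (le_of_subr_frac (p := 1) (q := t%:R)); [field | lra | lra].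
have x_ge2 : 2 <= (d%:R : R) by rewrite (ler_nat R 2); case: d d_gt0 d_neq1 => [|[|]].
rewrite /invsqrtS -[d.+1%:R]natr1.
move: (d%:R : R) (t%:R : R) x_ge2 t_ge1 t_neq0 => x y x_ge2 y_ge1 y_neq0.
have x_neq0 : x != 0 by apply/eqP; lra.
have x1_neq0 : x + 1 != 0 by apply/eqP; lra.
(* With m = sqrt (1/(x+1)), both weights are at least m and their squares differ
   by at most m^2/x, so the weights differ by at most m/(2x). *)
set m := Num.sqrt (x + 1)^-1.
have m_gt0 : 0 < m by rewrite sqrtr_gt0 invr_gt0; lra.
have m_sqr : m ^+ 2 = (x + 1)^-1 by rewrite sqr_sqrtr // invr_ge0; lra.
have A_ge0 : 0 <= (x + y - 2) / (x * y) by apply: divr_ge0; nra.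
have B_ge0 : 0 <= (x + 1 + y - 2) / ((x + 1) * y) by apply: divr_ge0; nra.
apply: (subr_le_of_sqr m_gt0).
- rewrite ler_sqrt //.
  apply: (le_of_subr_frac (p := x * x - x + y - 2) (q := x * y * (x + 1))); try nra.
  by field; rewrite ?x_neq0 ?y_neq0 ?x1_neq0.
- rewrite ler_sqrt //.
  apply: (le_of_subr_frac (p := x - 1) (q := y * (x + 1))); try nra.
  by field; rewrite ?x_neq0 ?y_neq0 ?x1_neq0.
- by apply: divr_ge0; [exact: ltW | lra].
rewrite !sqr_sqrtr //.
have -> : 2 * m * (m / (2 * x)) = m ^+ 2 / x by field.
rewrite m_sqr.
apply: (le_of_subr_frac (p := 2) (q := x * (x + 1) * y)); try nra.
by field; rewrite ?x_neq0 ?y_neq0 ?x1_neq0.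
Qed.

Lemma sqr_invsqrtS_le k d : (k <= d)%N -> invsqrtS d ^+ 2 <= (k.+1%:R)^-1.
Proof. by move=> kd; rewrite sqr_invsqrtS lef_pV2 ?posrE ?ltr0Sn // ler_nat. Qed.

Lemma weight_loss1_lt : weight_loss 1 < invsqrtS 1 / 2.
Proof.
rewrite /weight_loss /=.
have g_ge0 := ltW (invsqrtS_gt0 1).
have g_sqr : invsqrtS 1 ^+ 2 = 2^-1 by rewrite sqr_invsqrtS.
suff : 2 / 3 < invsqrtS 1 by lra.
by apply: lt_sqrtr_of_sqr; lra.
Qed.

Lemma weight_loss_mul_le d : (1 <= d)%N -> weight_loss d * d%:R <= invsqrtS d / 2.
Proof.
move=> d_gt0; case: (eqVneq d 1%N) => [->|d_neq1].
  by rewrite mulr1 ltW // weight_loss1_lt.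
rewrite /weight_loss (negbTE d_neq1) le_eqVlt; apply/orP; left; apply/eqP.
by field; rewrite pnatr_eq0 -lt0n.
Qed.

Lemma sqr_mean_gap (a b : R) :
  a ^+ 2 + b ^+ 2 - 2 * a ^+ 2 * b ^+ 2 =
  ((a + b) / 2) ^+ 2 + (3 / 4 * (a - b) ^+ 2 + a * b * (1 - 2 * (a * b))).
Proof. by field. Qed.

Lemma mean_le_sqrt (a b : R) : 0 <= a -> 0 <= b -> a * b <= 2^-1 ->
  (a + b) / 2 <= Num.sqrt (a ^+ 2 + b ^+ 2 - 2 * a ^+ 2 * b ^+ 2).
Proof.
move=> a_ge0 b_ge0 ab_le; apply: le_sqrtr_of_sqr; first lra.
have := sqr_ge0 (a - b); have := mulr_ge0 a_ge0 b_ge0.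
rewrite sqr_mean_gap lerDl; nra.
Qed.

Lemma mean_lt_sqrt (a b : R) : 0 < a -> 0 < b -> a * b < 2^-1 ->
  (a + b) / 2 < Num.sqrt (a ^+ 2 + b ^+ 2 - 2 * a ^+ 2 * b ^+ 2).
Proof.
move=> a_gt0 b_gt0 ab_lt; apply: lt_sqrtr_of_sqr; first lra.
have := sqr_ge0 (a - b); have := mulr_gt0 a_gt0 b_gt0.
rewrite sqr_mean_gap ltrDl; nra.
Qed.

Lemma weight_loss_sum_lt dx dy : (1 <= dx)%N -> (1 <= dy)%N ->
  weight_loss dx * dx%:R + weight_loss dy * dy%:R < abc_weight dx.+1 dy.+1.
Proof.
(* With a = invsqrtS dx and b = invsqrtS dy, the losses are at most a/2 and b/2 while the new
   weight is at least (a + b)/2; strictness comes from a degree equal to 1 or from ab < 1/2. *)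
move=> dx_gt0 dy_gt0.
have w_eq : abc_weight dx.+1 dy.+1 = Num.sqrt (invsqrtS dx ^+ 2 + invsqrtS dy ^+ 2
                                     - 2 * invsqrtS dx ^+ 2 * invsqrtS dy ^+ 2).
  by rewrite -sqr_abc_weightSS sqrtr_sqr ger0_norm ?sqrtr_ge0.
have lx := weight_loss_mul_le dx_gt0; have ly := weight_loss_mul_le dy_gt0.
have a_gt0 := invsqrtS_gt0 dx; have b_gt0 := invsqrtS_gt0 dy.
have a_sqr := sqr_invsqrtS_le dx_gt0; have b_sqr := sqr_invsqrtS_le dy_gt0.
have ab_sqr := sqr_ge0 (invsqrtS dx - invsqrtS dy).
rewrite w_eq; case: (boolP ((dx == 1) || (dy == 1))) => [d1 | /norP[dx_neq1 dy_neq1]].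
  have ab_le : invsqrtS dx * invsqrtS dy <= 2^-1 by nra.
  have := mean_le_sqrt (ltW a_gt0) (ltW b_gt0) ab_le.
  have := weight_loss1_lt.
  by case/orP: d1 => /eqP d1; rewrite d1 mulr1 in lx ly *; lra.
have dx_ge2 : (1 < dx)%N by rewrite ltn_neqAle eq_sym dx_neq1.
have a_sqr3 := sqr_invsqrtS_le dx_ge2.
have ab_lt : invsqrtS dx * invsqrtS dy < 2^-1 by nra.
have := mean_lt_sqrt a_gt0 b_gt0 ab_lt; lra.
Qed.

End ABCWeight.

(** * Weight sums of two bridged cliques *)

Section TwoCliques.
Variable R : realType.
Local Notation w := (abc_weight R).

(* For cliques K_a and K_b joined by a bridge, cliques_sum a b sums the edge weights over
   ordered pairs of adjacent vertices, i.e. it is twice the ABC index.  side_sum a b takes the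
   pairs starting in K_a: hub_sum a those inside K_a through the bridge end, rim_sum a those
   among the other vertices of K_a, plus the bridge itself. *)
Definition hub_sum (k : nat) : R := (w k (k - 1) + w (k - 1) k) *+ (k - 1).
Definition rim_sum (k : nat) : R := w (k - 1) (k - 1) *+ (k - 2) *+ (k - 1).
Definition side_sum (a b : nat) : R := hub_sum a + rim_sum a + w a b.
Definition cliques_sum (a b : nat) : R := side_sum a b + side_sum b a.

Lemma cliques_sumC a b : cliques_sum a b = cliques_sum b a.
Proof. exact: addrC. Qed.

Lemma rim_sumSS j : rim_sum j.+2 = j%:R * Num.sqrt (2 * j%:R).
Proof.
rewrite /rim_sum !subSS !subn0 -(mulr_natr (w _ _)) -(mulr_natr (_ * _)) /abc_weight.
rewrite -[j.+1%:R]natr1.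
have j_ge0 : 0 <= (j%:R : R) := ler0n _ j.
move: (j%:R : R) j_ge0 => x x_ge0.
rewrite -mulrA mulrC (mulr_sqrt (c := x * (x + 1))); first last.
- by apply: divr_ge0; nra.
- nra.
rewrite (mulr_sqrt (c := x)) //; last lra.
congr Num.sqrt; field; apply/eqP; lra.
Qed.

Lemma hub_sumSS j :
  hub_sum j.+2 = Num.sqrt (4 * (j%:R + 1) * (2 * j%:R + 1) / (j%:R + 2)).
Proof.
rewrite /hub_sum !subSS !subn0 (abc_weightC _ j.+1) -mulr2n.
rewrite -mulrnA -[_ *+ (2 * _)]mulr_natr /abc_weight natrM -[j.+2]addn2 natrD -[j.+1%:R]natr1.
have j_ge0 : 0 <= (j%:R : R) := ler0n _ j.
move: (j%:R : R) j_ge0 => x x_ge0.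
rewrite mulrC (mulr_sqrt (c := 2%:R * (x + 1))); first last.
- by apply: divr_ge0; nra.
- nra.
congr Num.sqrt; field; apply/andP; split; apply/eqP; lra.
Qed.

Lemma sqrt2n_le i j : (i <= j)%N -> Num.sqrt (2 * i%:R) <= Num.sqrt (2 * j%:R) :> R.
Proof. by move=> ij; rewrite ler_sqrt ?mulr_ge0 // ler_pM2l // ler_nat. Qed.

Lemma sqrt2n_step N :
  (N%:R + 3 / 2) * Num.sqrt (2 * N%:R) <= (N%:R + 1) * Num.sqrt (2 * N.+1%:R) :> R.
Proof.
have N_ge0 : 0 <= (N%:R : R) := ler0n _ N.
rewrite -(ler_pXn2r (n := 2)) ?nnegrE ?mulr_ge0 ?sqrtr_ge0 //; try lra.
rewrite !exprMn !sqr_sqrtr ?mulr_ge0 // -[N.+1%:R]natr1.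
move: (N%:R : R) N_ge0 => x x_ge0; nra.
Qed.

Lemma hub_sum_le l i : (l <= i)%N -> hub_sum l.+2 <= hub_sum i.+2.
Proof.
move=> li; rewrite !hub_sumSS.
have l_ge0 : 0 <= (l%:R : R) := ler0n _ l.
have li_R : (l%:R : R) <= i%:R by rewrite ler_nat.
move: (l%:R : R) (i%:R : R) l_ge0 li_R => y x y_ge0 yx.
rewrite ler_sqrt; last by apply: divr_ge0; nra.
apply: (le_of_subr_frac (p := 4 * ((x - y) * (2 * x * y + 4 * x + 4 * y + 5)))
                        (q := (x + 2) * (y + 2))); last by nra.
  by field; apply/andP; split; apply/eqP; lra.
by apply: mulr_ge0; [lra | apply: mulr_ge0; nra].
Qed.

Lemma hub_sum_le_sqrt m N : (1 <= m)%N -> (2 * m <= N)%N ->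
  hub_sum m.+2 <= 3 / 2 * Num.sqrt (2 * N%:R).
Proof.
move=> m_gt0 mN; rewrite hub_sumSS.
apply: sqrtr_le_of_sqr; first by apply: mulr_ge0; [lra | exact: sqrtr_ge0].
rewrite exprMn sqr_sqrtr ?mulr_ge0 //.
have m_ge1 : 1 <= (m%:R : R) by rewrite ler1n.
have mN_R : 2 * (m%:R : R) <= N%:R by rewrite -(ler_nat R) natrM in mN.
move: (m%:R : R) (N%:R : R) m_ge1 mN_R => x y x_ge1 xy.
apply: (@le_trans _ _ (9 * x)); last by lra.
apply: (le_of_subr_frac (p := x * x + 6 * x - 4) (q := x + 2)); try nra.
by field; apply/eqP; lra.
Qed.

Lemma hub_sum2 : hub_sum 2 = Num.sqrt (2 * 1%:R).
Proof. by rewrite (hub_sumSS 0); congr Num.sqrt; field. Qed.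

Lemma rim_hub_merge_le m l : (m <= l)%N ->
  rim_sum m.+2 + rim_sum l.+2 + hub_sum m.+2 <= rim_sum (m + l + 1).+2.
Proof.
(* Merging the two rims costs nothing, and the extra vertex of the merged rim gains at least
   (3/2) sqrt (2 (m + l)), which pays for hub_sum m.+2. *)
move=> ml; rewrite !rim_sumSS.
have sqrt_ml : m%:R * Num.sqrt (2 * m%:R) + l%:R * Num.sqrt (2 * l%:R)
               <= (m + l)%:R * Num.sqrt (2 * (m + l)%:R) :> R.
  rewrite [X in _ <= X * _]natrD (mulrDl m%:R).
  apply: lerD; rewrite ler_wpM2l // sqrt2n_le //.
    exact: leq_addr.
  exact: leq_addl.
have step := sqrt2n_step (m + l).
rewrite addn1 -natr1.
case: m ml sqrt_ml step => [|m] ml sqrt_ml step.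
  rewrite hub_sum2.
  have : Num.sqrt (2 * 1%:R) <= Num.sqrt (2 * (0 + l).+1%:R) :> R by apply: sqrt2n_le.
  have : (0 + l)%:R * Num.sqrt (2 * (0 + l)%:R) <= (0 + l)%:R * Num.sqrt (2 * (0 + l).+1%:R) :> R.
    by rewrite ler_wpM2l // sqrt2n_le.
  lra.
have : hub_sum m.+3 <= 3 / 2 * Num.sqrt (2 * (m.+1 + l)%:R).
  by apply: hub_sum_le_sqrt => //; rewrite mul2n -addnn leq_add2l.
lra.
Qed.

Lemma abc_weight_lt_pendant a b : (2 <= a)%N -> (2 <= b)%N ->
  w a b < w 1 (a + b - 1).
Proof.
move=> a_ge2 b_ge2; rewrite /abc_weight.
rewrite natrB ?natrD ?addn_gt0 ?(leq_trans _ a_ge2) //.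
have x_ge2 : 2 <= (a%:R : R) by rewrite (ler_nat R 2).
have y_ge2 : 2 <= (b%:R : R) by rewrite (ler_nat R 2).
move: (a%:R : R) (b%:R : R) x_ge2 y_ge2 => x y x_ge2 y_ge2.
rewrite ltr_sqrt; last by rewrite mul1r; apply: divr_gt0; lra.
apply: (lt_of_subr_frac (p := (x + y - 2) * (x * y - x - y + 1))
                        (q := x * y * (x + y - 1))).
- by field; apply/and3P; split; apply/eqP; lra.
- by apply: mulr_gt0; nra.
- by apply: mulr_gt0; nra.
Qed.

Lemma cliques_sum_lt a b : (2 <= a)%N -> (2 <= b)%N ->
  cliques_sum a b < cliques_sum 1 (a + b - 1).
Proof.
wlog ab : a b / (a <= b)%N.
  move=> lt_ab a_ge2 b_ge2; case: (leqP a b) => [ab|ba]; first exact: lt_ab.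
  by rewrite cliques_sumC addnC lt_ab // ltnW.
move=> a_ge2 b_ge2.
have lt_w := abc_weight_lt_pendant a_ge2 b_ge2.
rewrite /cliques_sum /side_sum (abc_weightC _ b a) (abc_weightC _ (a + b - 1) 1).
case: a a_ge2 ab lt_w => [|[|m]] // _; case: b b_ge2 => [|[|l]] // _ ml lt_w.
have n_eq : (m.+2 + l.+2 - 1 = (m + l + 1).+2)%N by lia.
rewrite n_eq in lt_w *.
have hub1 : hub_sum 1 = 0 by rewrite /hub_sum subnn mulr0n.
have rim1 : rim_sum 1 = 0 by rewrite /rim_sum subnn mulr0n.
have hub_le : hub_sum l.+2 <= hub_sum (m + l + 1).+2 by apply: hub_sum_le; lia.
have := @rim_hub_merge_le m l ml; lra.
Qed.

End TwoCliques.

(** * Adding an edge *)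

Definition abc_term (R : realType) n (e : rel 'I_n) (p q : 'I_n) : R :=
  if e p q then abc_weight R (deg e p) (deg e q) else 0.

Lemma abc_termC (R : realType) n (e : rel 'I_n) p q :
  symmetric e -> abc_term R e p q = abc_term R e q p.
Proof. by move=> e_sym; rewrite /abc_term e_sym abc_weightC. Qed.

Lemma ABC_ordered_pairs (R : realType) n (e : rel 'I_n) : simple_graph e ->
  \sum_p \sum_q abc_term R e p q = ABC R e *+ 2.
Proof.
case=> e_sym e_irr.
pose half (lt : 'I_n -> 'I_n -> bool) :=
  \sum_p \sum_q (if lt p q then abc_term R e p q else 0).
have split_lt : \sum_p \sum_q abc_term R e p q =
                half (fun p q => p < q)%N + half (fun p q => q < p)%N.
  rewrite -big_split; apply: eq_bigr => p _; rewrite -big_split; apply: eq_bigr => q _ /=.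
  case: (ltngtP p q) => [||/val_inj ->]; rewrite ?addr0 ?add0r //.
  by rewrite /abc_term e_irr.
have swap : half (fun p q => q < p)%N = half (fun p q => p < q)%N.
  rewrite /half exchange_big; apply: eq_bigr => p _; apply: eq_bigr => q _.
  by rewrite abc_termC.
have ABC_half : ABC R e = half (fun p q => p < q)%N.
  apply: eq_bigr => p _; rewrite big_mkcond; apply: eq_bigr => q _.
  by rewrite /abc_term; case: (p < q)%N; case: (e p q).
by rewrite split_lt swap ABC_half mulr2n.
Qed.

Lemma sum_split2 (V : nmodType) (T : finType) (F : T -> V) (x y : T) : x != y ->
  \sum_q F q = F x + F y + \sum_(q | (q != x) && (q != y)) F q.
Proof.
move=> xy; rewrite (bigD1 x) //= (bigD1 y) //= 1?eq_sym // addrA.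
by congr (_ + _); apply: eq_bigl => q; rewrite andbC.
Qed.

Definition is_pair n (u v p q : 'I_n) : bool :=
  ((p == u) && (q == v)) || ((p == v) && (q == u)).

Lemma is_pair_set2 n (u v p q : 'I_n) : is_pair u v p q -> [set p; q] = [set u; v].
Proof. by case/orP => /andP[/eqP -> /eqP ->] //; rewrite setUC. Qed.

Lemma set2_is_pair n (u v p q : 'I_n) : p != q -> [set p; q] = [set u; v] -> is_pair u v p q.
Proof.
move=> pq pq_uv; rewrite /is_pair.
have : p \in [set u; v] by rewrite -pq_uv set21.
have : q \in [set u; v] by rewrite -pq_uv set22.
by rewrite !inE => /orP[]/eqP qE /orP[]/eqP pE; rewrite pE qE ?eqxx /= ?orbT in pq *.
Qed.

Definition add_edge n (e : rel 'I_n) (x y : 'I_n) : rel 'I_n :=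
  fun p q => e p q || is_pair x y p q.

Section AddEdge.
Variables (R : realType) (n : nat) (e : rel 'I_n) (x y : 'I_n).
Hypotheses (e_simple : simple_graph e) (xy : x != y).

Local Notation e' := (add_edge e x y).

Lemma add_edge_simple : simple_graph e'.
Proof.
have [e_sym e_irr] := e_simple; split.
  move=> p q; rewrite /add_edge /is_pair e_sym.
  by case: (p == x) (q == y) (p == y) (q == x) => [] [] [] []; rewrite /= ?orbT ?orbF.
move=> p; rewrite /add_edge /is_pair e_irr /=.
by case: (eqVneq p x) => [->|]; rewrite ?(negbTE xy) ?andbF.
Qed.

Hypothesis nexy : ~~ e x y.

Lemma deg_add_edge p : deg e' p = (deg e p + ((p == x) || (p == y)))%N.
Proof.
have [e_sym _] := e_simple.
rewrite /deg /add_edge /is_pair.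
case: (eqVneq p x) => [->|px].
  rewrite (_ : [set q | _] = y |: [set q | e x q]).
    by rewrite cardsU1 inE (negbTE nexy) addnC.
  by apply/setP => q; rewrite !inE (negbTE xy) /= orbF orbC.
case: (eqVneq p y) => [->|py].
  rewrite (_ : [set q | _] = x |: [set q | e y q]).
    by rewrite cardsU1 inE e_sym (negbTE nexy) addnC.
  by apply/setP => q; rewrite !inE /= orbC.
by rewrite addn0; apply: eq_card => q; rewrite !inE /= orbF.
Qed.

Definition abc_gain p q : R := abc_term R e' p q - abc_term R e p q.

Lemma abc_gainC p q : abc_gain p q = abc_gain q p.
Proof.
have [e_sym _] := e_simple; have [e'_sym _] := add_edge_simple.
by rewrite /abc_gain abc_termC // [abc_term R e _ _]abc_termC.
Qed.

Lemma abc_gain_diag p : abc_gain p p = 0.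
Proof.
have [_ e_irr] := e_simple; have [_ e'_irr] := add_edge_simple.
by rewrite /abc_gain /abc_term e_irr e'_irr subrr.
Qed.

Lemma abc_gain_outside p q : p != x -> p != y -> q != x -> q != y -> abc_gain p q = 0.
Proof.
move=> px py qx qy; rewrite /abc_gain /abc_term !deg_add_edge.
rewrite (negbTE px) (negbTE py) (negbTE qx) (negbTE qy) !addn0.
by rewrite /add_edge /is_pair (negbTE px) (negbTE py) /= orbF subrr.
Qed.

Lemma abc_gain_xy : abc_gain x y = abc_weight R (deg e x).+1 (deg e y).+1.
Proof.
rewrite /abc_gain /abc_term (negbTE nexy) !deg_add_edge !eqxx orbT !addn1 subr0.
by rewrite /add_edge /is_pair !eqxx orbT.
Qed.

Lemma abc_gain_row_ge z : (z == x) || (z == y) ->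
  - (weight_loss R (deg e z) * (deg e z)%:R) <=
  \sum_(q | (q != x) && (q != y)) abc_gain z q.
Proof.
move=> z_end; have [e_sym e_irr] := e_simple.
pose loss q := if e z q then weight_loss R (deg e z) else 0.
have loss_sum : \sum_(q | (q != x) && (q != y)) loss q = weight_loss R (deg e z) * (deg e z)%:R.
  have [zx zy] : e z x = false /\ e z y = false.
    have neyx : ~~ e y x by rewrite e_sym.
    by case/orP: z_end => /eqP ->; rewrite e_irr ?(negbTE nexy) ?(negbTE neyx).
  have := sum_split2 loss xy; rewrite /loss zx zy !add0r => <-.
  rewrite -big_mkcond (eq_bigl (mem [set q | e z q])); last by move=> q; rewrite !inE.
  by rewrite sumr_const mulr_natr.
rewrite -loss_sum -sumrN; apply: ler_sum => q /andP[qx qy].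
rewrite /loss /abc_gain /abc_term.
have -> : e' z q = e z q by rewrite /add_edge /is_pair (negbTE qx) (negbTE qy) !andbF !orbF.
case: ifP => [ezq | _]; last by rewrite subrr oppr0.
rewrite !deg_add_edge z_end (negbTE qx) (negbTE qy) addn0 addn1 lerNl opprB.
apply: abc_weight_decrease_le; apply/card_gt0P.
  by exists q; rewrite inE.
by exists z; rewrite inE e_sym.
Qed.

Lemma abc_gain_sum :
  \sum_p \sum_q abc_gain p q =
  (abc_gain x y + \sum_(q | (q != x) && (q != y)) abc_gain x q
                + \sum_(q | (q != x) && (q != y)) abc_gain y q) *+ 2.
Proof.
have cross : \sum_(p | (p != x) && (p != y)) \sum_q abc_gain p q =
    \sum_(p | (p != x) && (p != y)) abc_gain x p + \sum_(p | (p != x) && (p != y)) abc_gain y p.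
  rewrite -big_split; apply: eq_bigr => p /andP[px py].
  rewrite (sum_split2 _ xy) (abc_gainC p x) (abc_gainC p y) big1 ?addr0 //.
  by move=> q /andP[qx qy]; apply: abc_gain_outside.
rewrite (sum_split2 _ xy) /= cross [\sum_q abc_gain x q](sum_split2 _ xy).
rewrite [\sum_q abc_gain y q](sum_split2 _ xy) !abc_gain_diag (abc_gainC y x) !mulr2n; lra.
Qed.

Lemma ABC_add_edge_lt : (0 < deg e x)%N -> (0 < deg e y)%N -> ABC R e < ABC R e'.
Proof.
move=> dx_gt0 dy_gt0.
rewrite -(ltr_pMn2r (ltn0Sn 1)) -!ABC_ordered_pairs //; last exact: add_edge_simple.
rewrite -subr_gt0 -sumrB (eq_bigr (fun p => \sum_q abc_gain p q)); last first.
  by move=> p _; rewrite -sumrB.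
rewrite abc_gain_sum.
have := abc_gain_row_ge (z := x); rewrite eqxx => /(_ isT).
have := abc_gain_row_ge (z := y); rewrite eqxx orbT => /(_ isT).
have := weight_loss_sum_lt R dx_gt0 dy_gt0.
rewrite abc_gain_xy pmulrn_lgt0 //; lra.
Qed.

End AddEdge.

(** * Edge cuts and bridges *)

Lemma del_edges0 n (e : rel 'I_n) : del_edges e set0 =2 e.
Proof. by move=> p q; rewrite /del_edges inE andbT. Qed.

Lemma connected_no_edge_cut0 n (e : rel 'I_n) : connected e <-> ~ has_edge_cut e 0.
Proof.
split=> [e_conn [F [_ /cards0_eq F0 not_conn]] | no_cut x y].
  by apply: not_conn => x y; rewrite F0 (eq_connect (del_edges0 e)).
apply/idPn => not_xy; apply: no_cut; exists set0; split; rewrite ?sub0set ?cards0 //.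
by move/(_ x y); rewrite (eq_connect (del_edges0 e)) (negbTE not_xy).
Qed.

Lemma edge_connectivity1_bridge n (e : rel 'I_n) (A : {set 'I_n}) u v :
  connected e -> u \in A -> v \notin A -> e u v ->
  (forall p q, e p q -> ((p \in A) == (q \in A)) || is_pair u v p q) ->
  edge_connectivity_is e 1.
Proof.
move=> e_conn uA vA euv crossing; split; last first.
  by case=> // _; apply/connected_no_edge_cut0.
exists [set [set u; v]]; split; rewrite ?cards1 //.
  by rewrite sub1set; apply/imset2P; exists u v; rewrite ?inE.
move=> conn_del.
have A_closed : closed (del_edges e [set [set u; v]]) A.
  move=> p q /andP[epq]; rewrite inE => not_uv.
  case/orP: (crossing p q epq) => [/eqP // | /is_pair_set2 pq_uv].
  by rewrite pq_uv eqxx in not_uv.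
by have := closed_connect A_closed (conn_del u v); rewrite uA (negbTE vA).
Qed.

Lemma connect_deg_gt0 n (e : rel 'I_n) p q : connect e p q -> p != q -> (0 < deg e p)%N.
Proof.
case/connectP => [[|r s] /= ]; first by move=> _ ->; rewrite eqxx.
by case/andP=> epr _ _ _; apply/card_gt0P; exists r; rewrite inE.
Qed.

Lemma add_edge_connected n (e : rel 'I_n) x y : connected e -> connected (add_edge e x y).
Proof.
move=> e_conn p q; apply: connect_sub (e_conn p q) => a b eab.
by apply: connect1; rewrite /add_edge eab.
Qed.

Lemma del_edges_sym n (e : rel 'I_n) F : symmetric e -> symmetric (del_edges e F).
Proof. by move=> e_sym p q; rewrite /del_edges e_sym setUC. Qed.

Definition bridge_side n (e : rel 'I_n) (u v : 'I_n) : {set 'I_n} :=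
  [set z | connect (del_edges e [set [set u; v]]) u z].

Section Bridge.
Variables (n : nat) (e : rel 'I_n) (u v : 'I_n).
Hypothesis e_simple : simple_graph e.
Local Notation e_uv := (del_edges e [set [set u; v]]).

Lemma del_bridge_split p q : e p q -> e_uv p q || is_pair u v p q.
Proof.
have [_ e_irr] := e_simple => epq; rewrite /del_edges epq inE /=.
case: eqP => [pq_uv|]; rewrite ?orbT // set2_is_pair //.
by apply: contraTneq epq => ->; rewrite e_irr.
Qed.

Lemma bridge_side_crossing p q :
  e p q -> ((p \in bridge_side e u v) == (q \in bridge_side e u v)) || is_pair u v p q.
Proof.
have e_uv_sym := del_edges_sym [set [set u; v]] e_simple.1.
move=> /del_bridge_split/orP[e_uv_pq | ->]; last by rewrite orbT.
by rewrite !inE (same_connect1r (sym_connect_sym e_uv_sym) e_uv_pq) eqxx.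
Qed.

End Bridge.

Lemma edge_connectivity1_bridge_ex n (e : rel 'I_n) :
  simple_graph e -> edge_connectivity_is e 1 ->
  exists u v, e u v /\ ~~ connect (del_edges e [set [set u; v]]) u v.
Proof.
move=> e_simple [[F [Fe /eqP/cards1P[s F1] not_conn]] no_cut].
have e_conn : connected e by apply/connected_no_edge_cut0; exact: no_cut.
move: Fe; rewrite F1 sub1set => /imset2P[u v _]; rewrite !inE => euv s_uv.
rewrite F1 s_uv in not_conn.
exists u, v; split => //; apply/negP => conn_uv; apply: not_conn => x y.
have e_uv_sym := del_edges_sym [set [set u; v]] e_simple.1.
apply: connect_sub (e_conn x y) => p q /(del_bridge_split u v e_simple)/orP[e_uv_pq | ].
  exact: connect1.
by case/orP => /andP[/eqP -> /eqP ->] //; rewrite (sym_connect_sym e_uv_sym).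
Qed.

(** * Graphs made of two bridged cliques *)

Lemma card_setD1 n (A : {set 'I_n}) x : x \in A -> #|A :\ x| = (#|A| - 1)%N.
Proof. by move=> xA; rewrite (cardsD1 x A) xA add1n subn1. Qed.

Definition bridged_cliques n (e : rel 'I_n) (A : {set 'I_n}) (u v : 'I_n) : Prop :=
  [/\ u \in A, v \notin A &
      forall p q, e p q = (p != q) && (((p \in A) == (q \in A)) || is_pair u v p q)].

Section BridgedCliques.
Variables (n : nat) (e : rel 'I_n) (A : {set 'I_n}) (u v : 'I_n).
Hypothesis e_bc : bridged_cliques e A u v.

Lemma bridged_cliquesC : bridged_cliques e (~: A) v u.
Proof.
have [uA vA eE] := e_bc; split; rewrite ?inE ?uA ?negbK // => p q.
rewrite eE !inE /is_pair.
by case: (p \in A); case: (q \in A); case: (p == u); case: (q == v);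
   case: (p == v); case: (q == u).
Qed.

Lemma bridged_cliques_simple : simple_graph e.
Proof.
have [_ _ eE] := e_bc; split=> [p q|p]; last by rewrite eE eqxx.
rewrite !eE eq_sym (eq_sym (q \in A)) /is_pair.
by case: (p == u); case: (q == v); case: (p == v); case: (q == u); rewrite /= ?orbT ?orbF.
Qed.

Lemma bridged_cliques_connected : connected e.
Proof.
have [uA vA eE] := e_bc; have [e_sym _] := bridged_cliques_simple.
have uv : u != v by apply: contraNneq vA => <-.
have evu : e v u by rewrite eE eq_sym uv /is_pair !eqxx !orbT.
suff to_u p : connect e p u.
  by move=> x y; apply: connect_trans (to_u x) _; rewrite sym_connect_sym.
case: (eqVneq p u) => [->|pu]; first exact: connect0.
case: (boolP (p \in A)) => pA.
  by apply: connect1; rewrite eE pu pA uA.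
case: (eqVneq p v) => [->|pv]; first exact: connect1.
apply: (connect_trans (y := v)); last exact: connect1.
by apply: connect1; rewrite eE pv (negbTE pA) (negbTE vA).
Qed.

Lemma bridged_cliques_edge_connectivity1 : edge_connectivity_is e 1.
Proof.
have [uA vA eE] := e_bc.
apply: (edge_connectivity1_bridge bridged_cliques_connected uA vA).
  by rewrite eE uA (negbTE vA) /is_pair !eqxx /= andbT; apply: contraNneq vA => <-.
by move=> p q; rewrite eE => /andP[_].
Qed.

Lemma bridge_end_neighbours : [set q | e u q] = v |: (A :\ u).
Proof.
have [uA vA eE] := e_bc; have uv : u != v by apply: contraNneq vA => <-.
apply/setP => q; rewrite !inE eE uA /is_pair eqxx (negbTE uv) /= orbF (eq_sym u).
case: (eqVneq q v) => [->|qv]; first by rewrite (negbTE vA) eq_sym uv orbT.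
by case: (q \in A); rewrite ?andbT ?andbF.
Qed.

Lemma clique_neighbours p : p \in A -> p != u -> [set q | e p q] = A :\ p.
Proof.
have [uA vA eE] := e_bc => pA pu.
have pv : p != v by apply: contraNneq vA => <-.
apply/setP => q; rewrite !inE eE pA /is_pair (negbTE pu) (negbTE pv) /= orbF.
by rewrite eq_sym; case: (q \in A); rewrite ?andbT ?andbF.
Qed.

Lemma deg_bridge_end : deg e u = #|A|.
Proof.
have [uA vA _] := e_bc.
rewrite /deg bridge_end_neighbours cardsU1 !inE (negbTE vA) andbF card_setD1 //.
by rewrite add1n subn1 prednK //; apply/card_gt0P; exists u.
Qed.

Lemma deg_clique p : p \in A -> p != u -> deg e p = (#|A| - 1)%N.
Proof.
by move=> pA pu; rewrite /deg clique_neighbours // card_setD1.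
Qed.

End BridgedCliques.

Section BridgedCliquesABC.
Variables (R : realType) (n : nat) (e : rel 'I_n) (A : {set 'I_n}) (u v : 'I_n).
Hypothesis e_bc : bridged_cliques e A u v.
Local Notation w := (abc_weight R).

Lemma abc_row_bridge_end :
  \sum_q abc_term R e u q = w #|A| (#|A| - 1) *+ (#|A| - 1) + w #|A| #|~: A|.
Proof.
have [uA vA _] := e_bc.
rewrite /abc_term -big_mkcond (eq_bigl (fun q => q \in v |: (A :\ u))); last first.
  by move=> q; rewrite -(bridge_end_neighbours e_bc) inE.
rewrite big_setU1 /=; last by rewrite !inE (negbTE vA) andbF.
rewrite (deg_bridge_end e_bc) (deg_bridge_end (bridged_cliquesC e_bc)) addrC.
rewrite (eq_bigr (fun _ => w #|A| (#|A| - 1))) ?sumr_const ?card_setD1 //.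
by move=> q; rewrite !inE => /andP[qu qA]; rewrite (deg_clique e_bc qA qu).
Qed.

Lemma abc_row_clique p : p \in A -> p != u ->
  \sum_q abc_term R e p q = w (#|A| - 1) #|A| + w (#|A| - 1) (#|A| - 1) *+ (#|A| - 2).
Proof.
have [uA _ _] := e_bc => pA pu.
rewrite /abc_term -big_mkcond (eq_bigl (fun q => q \in A :\ p)); last first.
  by move=> q; rewrite -(clique_neighbours e_bc pA pu) inE.
rewrite (big_setD1 u) /=; last by rewrite !inE eq_sym pu.
rewrite (deg_clique e_bc pA pu) (deg_bridge_end e_bc); congr (_ + _).
rewrite (eq_bigr (fun _ => w (#|A| - 1) (#|A| - 1))); last first.
  by move=> q; rewrite !inE => /and3P[qu qp qA]; rewrite (deg_clique e_bc qA qu).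
rewrite sumr_const !card_setD1 ?inE 1?eq_sym ?pu //.
by rewrite -subnDA.
Qed.

Lemma abc_rows_side : \sum_(p in A) \sum_q abc_term R e p q = side_sum R #|A| #|~: A|.
Proof.
have [uA _ _] := e_bc.
rewrite (big_setD1 u) //= abc_row_bridge_end.
rewrite (eq_bigr (fun _ => w (#|A| - 1) #|A| + w (#|A| - 1) (#|A| - 1) *+ (#|A| - 2))).
  rewrite sumr_const card_setD1 // /side_sum /hub_sum /rim_sum.
  by rewrite !mulrnDl; lra.
by move=> p; rewrite !inE => /andP[pu pA]; rewrite (abc_row_clique pA pu).
Qed.

End BridgedCliquesABC.

Lemma ABC_bridged_cliques (R : realType) n (e : rel 'I_n) A u v :
  bridged_cliques e A u v -> ABC R e *+ 2 = cliques_sum R #|A| #|~: A|.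
Proof.
move=> e_bc; rewrite -ABC_ordered_pairs; last exact: bridged_cliques_simple e_bc.
rewrite (bigID (mem A)) /= (abc_rows_side R e_bc).
have := abc_rows_side R (bridged_cliquesC e_bc); rewrite setCK /cliques_sum => <-.
by congr (_ + _); apply: eq_bigl => p; rewrite inE.
Qed.

Lemma bridged_cliques_Knk1 n : bridged_cliques (Knk n.+2 1) [set ord_max] ord_max ord0.
Proof.
split; rewrite ?inE // => p q.
have is_max (z : 'I_n.+2) : (z == n.+1 :> nat) = (z == ord_max) by [].
have is_0 (z : 'I_n.+2) : (z < 1)%N = (z == ord0) by rewrite ltnS leqn0.
rewrite /Knk /is_pair !inE !is_max !is_0.
case: (eqVneq p ord_max) => [->|pm]; case: (eqVneq q ord_max) => [->|qm] //=.
- by rewrite orbF.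
- by rewrite andbT.
Qed.

Lemma bridged_cliques_pendant_iso n (e : rel 'I_n.+2) A u v :
  bridged_cliques e A u v -> (#|A| <= 1)%N -> isomorphic e (Knk n.+2 1).
Proof.
case=> uA vA eE A_le1; have [_ _ KE] := bridged_cliques_Knk1 n.
have A1 : A = [set u] by apply/eqP; rewrite eq_sym eqEcard sub1set uA cards1.
have vu : v != u by rewrite A1 inE in vA.
pose f := (tperm u ord_max * tperm (tperm u ord_max v) ord0)%g.
have fu : f u = ord_max.
  rewrite permM tpermL tpermD //; apply: contra vu => /eqP mv.
  by rewrite -[v](tpermK u ord_max) mv tpermR.
have fv : f v = ord0 by rewrite permM tpermL.
by exists f => p q; rewrite eE KE A1 !inE -fu -fv /is_pair !(inj_eq perm_inj).
Qed.

Lemma bridged_cliques_ABC_lt_Knk1 (R : realType) n (e : rel 'I_n.+2) A u v :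
  bridged_cliques e A u v -> (2 <= #|A|)%N -> (2 <= #|~: A|)%N ->
  ABC R e < ABC R (Knk n.+2 1).
Proof.
move=> e_bc A_ge2 CA_ge2.
rewrite -(ltr_pMn2r (ltn0Sn 1)) (ABC_bridged_cliques R e_bc).
rewrite (ABC_bridged_cliques R (bridged_cliques_Knk1 n)) cards1.
have -> : #|~: [set ord_max : 'I_n.+2]| = (#|A| + #|~: A| - 1)%N.
  by rewrite cardsC1 cardsC card_ord.
exact: cliques_sum_lt.
Qed.

(** * Extremal graphs *)

Section Extremal.
Variables (R : realType) (n : nat) (e : rel 'I_n).
Hypotheses (e_simple : simple_graph e) (e_ec1 : edge_connectivity_is e 1).
Hypothesis e_max : forall e' : rel 'I_n, simple_graph e' -> edge_connectivity_is e' 1 ->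
  ABC R e' <= ABC R e.

Lemma extremal_connected : connected e.
Proof. by apply/connected_no_edge_cut0; exact: e_ec1.2. Qed.

Lemma extremal_adjacent p q : p != q -> edge_connectivity_is (add_edge e p q) 1 -> e p q.
Proof.
move=> pq ec1_pq; apply/idPn => nepq.
have := e_max (add_edge_simple e_simple pq) ec1_pq; rewrite leNgt.
have qp : q != p by rewrite eq_sym.
have dp := connect_deg_gt0 (extremal_connected p q) pq.
have dq := connect_deg_gt0 (extremal_connected q p) qp.
by rewrite ABC_add_edge_lt.
Qed.

Lemma extremal_bridged_cliques : exists A u v, bridged_cliques e A u v.
Proof.
have [e_sym e_irr] := e_simple.
have [u [v [euv not_uv]]] := edge_connectivity1_bridge_ex e_simple e_ec1.
have uA : u \in bridge_side e u v by rewrite inE connect0.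
have vA : v \notin bridge_side e u v by rewrite inE.
exists (bridge_side e u v), u, v; split => // p q; apply/idP/idP.
  move=> epq; rewrite (bridge_side_crossing u v e_simple epq) andbT.
  by apply: contraTneq epq => ->; rewrite e_irr.
case/andP => pq /orP[same_side | /orP[] /andP[/eqP -> /eqP ->] //]; last by rewrite e_sym.
apply: extremal_adjacent pq _.
apply: (edge_connectivity1_bridge (add_edge_connected _ _ extremal_connected) uA vA).
  by rewrite /add_edge euv.
move=> a b /orP[/(bridge_side_crossing u v e_simple) // | /orP[] /andP[/eqP -> /eqP ->]].
  by rewrite same_side.
by rewrite eq_sym same_side.
Qed.

End Extremal.

Theorem theorem4 (R : realType) (n : nat) (e : rel 'I_n) :
  (2 <= n)%N ->
  simple_graph e ->
  edge_connectivity_is e 1%N ->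
  (forall e' : rel 'I_n, simple_graph e' -> edge_connectivity_is e' 1%N ->
     ABC R e' <= ABC R e) ->
  isomorphic e (Knk n 1%N).
Proof.
case: n e => [|[|n]] e // _ e_simple e_ec1 e_max.
have [A [u [v e_bc]]] := extremal_bridged_cliques e_simple e_ec1 e_max.
have [A_le1 | A_ge2] := leqP #|A| 1; first exact: bridged_cliques_pendant_iso e_bc A_le1.
have [CA_le1 | CA_ge2] := leqP #|~: A| 1.
  exact: bridged_cliques_pendant_iso (bridged_cliquesC e_bc) CA_le1.
have Knk1_bc := bridged_cliques_Knk1 n.
have := e_max _ (bridged_cliques_simple Knk1_bc) (bridged_cliques_edge_connectivity1 Knk1_bc).
by rewrite leNgt (bridged_cliques_ABC_lt_Knk1 R e_bc).
Qed.
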